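(* For any ring $R$ the following conditions are equivalent: (1) every non-faithful left $R$-module is semiartinian; (2) every non-faithful left $R$-module is an essential extension of its socle; (3) every non-zero non-faithful left $R$-module contains a simple submodule; (4) $R/I$ is left semiartinian for every non-zero two-sided ideal $I$ of $R$; (5) for every proper left ideal $L$ of $R$ with non-zero core, the cyclic left $R$-module $R/L$ contains a simple submodule.
   Context: Rings are associative with identity $1\neq 0$. A module is non-faithful if its annihilator in $R$ is non-zero. A module $M$ is semiartinian if every non-zero homomorphic image of $M$ contains a simple submodule. A ring is left semiartinian if every non-zero left module over it has a simple submodule (equivalently, the ring is semiartinian as a left module over itself). The core of a left ideal $L$ is the largest two-sided ideal of $R$ contained in $L$ (i.e., the annihilator of the module $R/L$). *)

From HB Require Import structures.
From mathcomp Require Import all_boot all_order all_algebra.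
From Stdlib Require Import ClassicalEpsilon.

Set Implicit Arguments.
Unset Strict Implicit.
Unset Printing Implicit Defensive.

Import GRing.Theory.
Local Open Scope ring_scope.
Local Open Scope quotient_scope.

Definition asbool (P : Prop) : bool :=
  if excluded_middle_informative P then true else false.

Lemma asboolP (P : Prop) : reflect P (asbool P).
Proof. by rewrite /asbool; case: excluded_middle_informative => h; constructor. Qed.

Section ModuleNotions.
Variables (R : pzRingType) (M : lmodType R).

Definition submodule (S : M -> Prop) : Prop :=
  [/\ S 0, (forall x y, S x -> S y -> S (x + y))
         & (forall (r : R) x, S x -> S (r *: x))].

Definition nonzero_sub (S : M -> Prop) : Prop := exists2 x, S x & x <> 0.

Definition nonzero_module : Prop := exists x : M, x <> 0.

Definition simple_submodule (S : M -> Prop) : Prop :=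
  [/\ submodule S, nonzero_sub S &
      forall T : M -> Prop, submodule T -> (forall x, T x -> S x) ->
        (forall x, T x -> x = 0) \/ (forall x, S x -> T x)].

Definition has_simple_submodule : Prop :=
  exists S : M -> Prop, simple_submodule S.

(* socle: the sum of all simple submodules *)
Definition socle (x : M) : Prop :=
  exists s : seq M,
    (forall y, y \in s -> exists2 S, simple_submodule S & S y) /\
    x = \sum_(y <- s) y.

Definition essential_over_socle : Prop :=
  forall N : M -> Prop, submodule N -> nonzero_sub N ->
    exists x, [/\ N x, socle x & x <> 0].

Definition non_faithful : Prop :=
  exists2 r : R, r <> 0 & forall m : M, r *: m = 0.

End ModuleNotions.

Definition semiartinian (R : pzRingType) (M : lmodType R) : Prop :=
  forall (N : lmodType R) (f : {linear M -> N}),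
    (forall n : N, exists m : M, f m = n) ->
    nonzero_module N -> has_simple_submodule N.

Definition left_semiartinian (S : pzRingType) : Prop :=
  forall M : lmodType S, nonzero_module M -> has_simple_submodule M.

Definition left_ideal (R : pzRingType) (L : R -> Prop) : Prop :=
  @submodule R R^o L.

Definition two_sided_ideal (R : pzRingType) (I : R -> Prop) : Prop :=
  left_ideal I /\ (forall x r : R, I x -> I (x * r)).

(* core of a left ideal: the largest two-sided ideal contained in L
   (= union of all two-sided ideals contained in L) *)
Definition core (R : pzRingType) (L : R -> Prop) (r : R) : Prop :=
  exists J : R -> Prop, [/\ two_sided_ideal J, (forall x, J x -> L x) & J r].

Section QuotMod.
Variables (R : pzRingType) (V : lmodType R) (K : V -> Prop) (HK : submodule K).

Lemma subK0 : K 0. Proof. by case: HK. Qed.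
Lemma subKD x y : K x -> K y -> K (x + y). Proof. by case: HK => _ h _; apply: h. Qed.
Lemma subKZ (r : R) x : K x -> K (r *: x). Proof. by case: HK => _ _ h; apply: h. Qed.
Lemma subKN x : K x -> K (- x).
Proof. by move=> Kx; rewrite -scaleN1r; apply: subKZ. Qed.

Definition qequiv (x y : V) : bool := asbool (K (x - y)).

Lemma qequiv_is_equiv : equiv_class_of qequiv.
Proof.
split=> [x|x y|y x z]; rewrite /qequiv.
- by apply/asboolP; rewrite subrr; apply: subK0.
- apply/asboolP/asboolP => h; rewrite -opprB; exact: subKN.
- move=> /asboolP h1 /asboolP h2; apply/asboolP.
  by rewrite -[x](addrNK y) -addrA; apply: subKD.
Qed.

Canonical qequiv_equiv := EquivRelPack qequiv_is_equiv.
Canonical qequiv_encModRel := defaultEncModRel qequiv.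

Definition quotmod := {eq_quot qequiv}.

HB.instance Definition _ : EqQuotient V qequiv quotmod := EqQuotient.on quotmod.
HB.instance Definition _ := Choice.on quotmod.

Lemma qequivP x y : reflect (K (x - y)) (x == y %[mod quotmod]).
Proof. by rewrite piE; apply: asboolP. Qed.

Lemma Krepr x : K (repr (\pi_quotmod x) - x).
Proof. by have /eqP := reprK (\pi_quotmod x); rewrite piE => /asboolP. Qed.
Lemma Krepr' x : K (x - repr (\pi_quotmod x)).
Proof. by rewrite -opprB; apply: subKN; apply: Krepr. Qed.

Definition qzero : quotmod := lift_cst quotmod 0.
Definition qadd := lift_op2 quotmod +%R.
Definition qopp := lift_op1 quotmod -%R.
Definition qscale (r : R) := lift_op1 quotmod ( *:%R r).

Canonical pi_qzero_morph := PiConst qzero.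

Lemma pi_qopp : {morph \pi : x / - x >-> qopp x}.
Proof.
move=> x; unlock qopp; apply/eqP; rewrite piE; apply/asboolP.
by rewrite -opprD; apply: subKN; apply: Krepr'.
Qed.
Canonical pi_qopp_morph := PiMorph1 pi_qopp.

Lemma pi_qadd : {morph \pi : x y / x + y >-> qadd x y}.
Proof.
move=> x y /=; unlock qadd; apply/eqP; rewrite piE; apply/asboolP.
rewrite opprD addrACA; by apply: subKD; apply: Krepr'.
Qed.
Canonical pi_qadd_morph := PiMorph2 pi_qadd.

Lemma pi_qscale r : {morph \pi : x / r *: x >-> qscale r x}.
Proof.
move=> x; rewrite /qscale; unlock; apply/eqP; rewrite piE; apply/asboolP.
rewrite -scalerBr; by apply: subKZ; apply: Krepr'.
Qed.
Canonical pi_qscale_morph r := PiMorph1 (pi_qscale r).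

Lemma qaddA : associative qadd.
Proof. by move=> x y z; rewrite -[x]reprK -[y]reprK -[z]reprK !piE addrA. Qed.
Lemma qaddC : commutative qadd.
Proof. by move=> x y; rewrite -[x]reprK -[y]reprK !piE addrC. Qed.
Lemma qadd0 : left_id qzero qadd.
Proof. by move=> x; rewrite -[x]reprK !piE add0r. Qed.
Lemma qaddN : left_inverse qzero qopp qadd.
Proof. by move=> x; rewrite -[x]reprK !piE addNr. Qed.

HB.instance Definition _ := GRing.isZmodule.Build quotmod qaddA qaddC qadd0 qaddN.

Lemma qscaleA a b v : qscale a (qscale b v) = qscale (a * b) v.
Proof. by rewrite -[v]reprK !piE scalerA. Qed.
Lemma qscale1 : left_id 1 qscale.
Proof. by move=> v; rewrite -[v]reprK !piE scale1r. Qed.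
Lemma qscaleDr : right_distributive qscale +%R.
Proof.
move=> a u v; change (qscale a (qadd u v) = qadd (qscale a u) (qscale a v)).
by rewrite -[u]reprK -[v]reprK !piE scalerDr.
Qed.
Lemma qscaleDl v : {morph qscale^~ v : a b / a + b}.
Proof.
move=> a b; change (qscale (a + b) v = qadd (qscale a v) (qscale b v)).
by rewrite -[v]reprK !piE scalerDl.
Qed.

HB.instance Definition _ :=
  GRing.Zmodule_isLmodule.Build R quotmod qscaleA qscale1 qscaleDr qscaleDl.

End QuotMod.

Definition cyclic_quot (R : pzRingType) (L : R -> Prop) (HL : left_ideal L) :
  lmodType R := quotmod HL.

Section QuotRing.
Variables (R : pzRingType) (I : R -> Prop) (HI : two_sided_ideal I).

Definition quotring := quotmod (proj1 HI).
HB.instance Definition _ := GRing.Zmodule.on quotring.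
HB.instance Definition _ := EqQuotient.on quotring.

Definition rone : quotring := lift_cst quotring 1.
Definition rmul := lift_op2 quotring *%R.
Canonical pi_rone_morph := PiConst rone.

Lemma IR x r : I x -> I (x * r). Proof. by case: HI => _; apply. Qed.
Lemma IL r x : I x -> I (r * x).
Proof. by case: HI => h _ Ix; apply: (subKZ h). Qed.

Lemma pi_rmul : {morph \pi_quotring : x y / x * y >-> rmul x y}.
Proof.
move=> x y; unlock rmul; apply/eqP; rewrite piE; apply/asboolP.
rewrite -[_ * _](addrNK (x * repr (\pi_quotring y))) -mulrBr.
rewrite -addrA -mulrBl; apply: (subKD (proj1 HI)).
  by apply: IL; first [exact: (Krepr' (proj1 HI)) | exact: (Krepr (proj1 HI))].
by apply: IR; first [exact: (Krepr' (proj1 HI)) | exact: (Krepr (proj1 HI))].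
Qed.
Canonical pi_rmul_morph := PiMorph2 pi_rmul.

Lemma rmulA : associative rmul.
Proof. by move=> x y z; rewrite -[x]reprK -[y]reprK -[z]reprK !piE mulrA. Qed.
Lemma rmul1 : left_id rone rmul.
Proof. by move=> x; rewrite -[x]reprK !piE mul1r. Qed.
Lemma rmulr1 : right_id rone rmul.
Proof. by move=> x; rewrite -[x]reprK !piE mulr1. Qed.
Lemma rmulDl : left_distributive rmul +%R.
Proof.
move=> x y z; change (rmul (qadd x y) z = qadd (rmul x z) (rmul y z)).
by rewrite -[x]reprK -[y]reprK -[z]reprK !piE mulrDl.
Qed.
Lemma rmulDr : right_distributive rmul +%R.
Proof.
move=> x y z; change (rmul x (qadd y z) = qadd (rmul x y) (rmul x z)).
by rewrite -[x]reprK -[y]reprK -[z]reprK !piE mulrDr.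
Qed.

HB.instance Definition _ :=
  GRing.Zmodule_isPzRing.Build quotring rmulA rmul1 rmulr1 rmulDl rmulDr.

End QuotRing.

From HB Require Import structures.
From mathcomp Require Import all_boot all_order all_algebra.

(* A module is non-faithful exactly when it is a module over [R/I] for a non-zero
   ideal [I] (namely its annihilator), and restriction and extension of scalars
   along [R -> R/I] preserve simple submodules; this links (3) and (4).  Every
   homomorphic image of a non-faithful module is non-faithful, so (1) and (3)
   agree.  For (5) and (2): if [n <> 0] lies in a submodule [N] of a non-faithful
   [M], then [R/ann(n)] is a proper cyclic module whose core contains [ann(M)],
   and it embeds onto [Rn], which lies in [N]; so a simple submodule of [R/ann(n)]
   gives a non-zero element of the socle inside [N]. *)

Set Implicit Arguments.
Unset Strict Implicit.
Unset Printing Implicit Defensive.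

Import GRing.Theory.
Local Open Scope ring_scope.
Local Open Scope quotient_scope.

Section QuotientModule.
Variables (R : pzRingType) (V : lmodType R) (K : V -> Prop) (HK : submodule K).

Lemma quotmod_pi_eq0 x : \pi_(quotmod HK) x = 0 <-> K x.
Proof.
have -> : (0 : quotmod HK) = \pi 0 by rewrite piE.
split=> [/eqP | Kx]; last by apply/eqP/qequivP; rewrite subr0.
by rewrite -/(x == 0 %[mod quotmod HK]) => /qequivP; rewrite subr0.
Qed.

Lemma quotmod_piD x y :
  \pi_(quotmod HK) (x + y) = \pi_(quotmod HK) x + \pi_(quotmod HK) y.
Proof. by rewrite piE. Qed.

Lemma quotmod_piZ r x : \pi_(quotmod HK) (r *: x) = r *: \pi_(quotmod HK) x.
Proof. exact: pi_qscale. Qed.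

End QuotientModule.

Section QuotientRing.
Variables (R : pzRingType) (I : R -> Prop) (HI : two_sided_ideal I).

Lemma quotring_piM a b :
  \pi_(quotring HI) (a * b) = \pi_(quotring HI) a * \pi_(quotring HI) b.
Proof. exact: pi_rmul. Qed.

Lemma quotring_pi1 : \pi_(quotring HI) 1 = 1.
Proof. by rewrite piE. Qed.

Lemma quotring_piD a b :
  \pi_(quotring HI) (a + b) = \pi_(quotring HI) a + \pi_(quotring HI) b.
Proof. exact: quotmod_piD. Qed.

Lemma quotring_pi_eq0 a : \pi_(quotring HI) a = 0 <-> I a.
Proof. exact: quotmod_pi_eq0. Qed.

End QuotientRing.

(* [phi] need not be linear, nor even defined over the same ring: it only has to
   map scalar orbits onto scalar orbits.  This covers both changes of rings
   between [R] and [R/I] as well as the embedding of [R/ann(m)] onto [Rm]. *)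
Section SimpleSubmoduleImage.
Variables (R1 R2 : pzRingType) (A : lmodType R1) (B : lmodType R2) (phi : A -> B).
Hypotheses (phiD : {morph phi : x y / x + y})
  (phi_inj0 : forall x, phi x = 0 -> x = 0)
  (phi_scale : forall r x, exists s, phi (r *: x) = s *: phi x)
  (scale_phi : forall s x, exists r, s *: phi x = phi (r *: x)).

Let phi0 : phi 0 = 0.
Proof. by apply: (addrI (phi 0)); rewrite -phiD !addr0. Qed.

Lemma simple_submodule_image (S : A -> Prop) : simple_submodule S ->
  simple_submodule (fun y => exists2 x, S x & y = phi x).
Proof.
case=> [[S0 SD SZ] [x Sx x0] Smin]; split.
- split.
  + by exists 0.
  + by move=> _ _ [a Sa ->] [b Sb ->]; exists (a + b); [apply: SD | rewrite phiD].
  + move=> s _ [a Sa ->]; have [r ->] := scale_phi s a.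
    by exists (r *: a); first apply: SZ.
- by exists (phi x); [exists x | move/phi_inj0].
- move=> T [T0 TD TZ] TS.
  have subST : submodule (fun a => S a /\ T (phi a)).
    split.
    + by split; rewrite ?phi0.
    + by move=> a b [Sa Ta] [Sb Tb]; split; [apply: SD | rewrite phiD; apply: TD].
    + move=> r a [Sa Ta]; have [s ->] := phi_scale r a.
      by split; [apply: SZ | apply: TZ].
  have [ST0 | SST] := Smin _ subST (fun a => @proj1 _ _).
  + left=> y Ty; have [a Sa ya] := TS y Ty.
    by rewrite ya (ST0 a) ?phi0 //; split; rewrite -?ya.
  + by right=> _ [a Sa ->]; case: (SST a Sa).
Qed.

Lemma has_simple_submodule_image : has_simple_submodule A -> has_simple_submodule B.
Proof.
by case=> S /simple_submodule_image simS; exists (fun y => exists2 x, S x & y = phi x).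
Qed.

End SimpleSubmoduleImage.

Section Annihilator.
Variables (R : pzRingType) (M : lmodType R).

Definition ann : R -> Prop := fun a => forall m : M, a *: m = 0.

Definition ann_elt (m : M) : R -> Prop := fun a => a *: m = 0.

Lemma ann_two_sided_ideal : two_sided_ideal ann.
Proof.
split; [split|].
- by move=> m; rewrite scale0r.
- by move=> a b ha hb m; rewrite scalerDl ha hb addr0.
- by move=> r a ha m; change ((r * a) *: m = 0); rewrite -scalerA ha scaler0.
- by move=> a r ha m; rewrite -scalerA ha.
Qed.

Lemma ann_elt_left_ideal m : left_ideal (ann_elt m).
Proof.
split.
- by rewrite /ann_elt scale0r.
- by move=> a b ha hb; rewrite /ann_elt scalerDl ha hb addr0.
- by move=> r a ha; change ((r * a) *: m = 0); rewrite -scalerA ha scaler0.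
Qed.

Lemma ann_sub_core_ann_elt m r : ann r -> core (ann_elt m) r.
Proof.
by move=> hr; exists ann; split=> //; [exact: ann_two_sided_ideal | move=> a; apply].
Qed.

Lemma simple_submodule_in_cyclic m :
  has_simple_submodule (cyclic_quot (ann_elt_left_ideal m)) ->
  exists2 S : M -> Prop, simple_submodule S & forall x, S x -> exists a, x = a *: m.
Proof.
set HL := ann_elt_left_ideal m.
pose embed (q : cyclic_quot HL) : M := (repr q : R) *: m.
have embedE (a : R) : embed (\pi_(quotmod HL) a) = a *: m.
  by apply/eqP; rewrite -subr_eq0 -scalerBl; apply/eqP; apply: (Krepr HL).
case=> S simS; exists (fun y => exists2 q, S q & y = embed q).
  apply: simple_submodule_image simS.
  - by elim/quotW=> a; elim/quotW=> b; rewrite -quotmod_piD !embedE scalerDl.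
  - by elim/quotW=> a; rewrite embedE => a0; apply/quotmod_pi_eq0.
  - move=> r; elim/quotW=> a; exists r.
    by rewrite -quotmod_piZ !embedE -scalerA.
  - move=> s; elim/quotW=> a; exists s.
    by rewrite -quotmod_piZ !embedE -scalerA.
by move=> _ [q _ ->]; exists (repr q).
Qed.

End Annihilator.

Section ScalarRestriction.
Variables (R : pzRingType) (I : R -> Prop) (HI : two_sided_ideal I).
Variable N : lmodType (quotring HI).

Definition scalar_restriction : Type := N.
HB.instance Definition _ := GRing.Zmodule.on scalar_restriction.

Definition restricted_scale (r : R) (x : scalar_restriction) : scalar_restriction :=
  \pi_(quotring HI) r *: (x : N).

Lemma restricted_scaleA a b v :
  restricted_scale a (restricted_scale b v) = restricted_scale (a * b) v.
Proof. by rewrite /restricted_scale scalerA quotring_piM. Qed.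

Lemma restricted_scale1 : left_id 1 restricted_scale.
Proof. by move=> v; rewrite /restricted_scale quotring_pi1 scale1r. Qed.

Lemma restricted_scaleDr : right_distributive restricted_scale +%R.
Proof. by move=> a u v; rewrite /restricted_scale scalerDr. Qed.

Lemma restricted_scaleDl v : {morph restricted_scale^~ v : a b / a + b}.
Proof. by move=> a b; rewrite /restricted_scale quotring_piD scalerDl. Qed.

HB.instance Definition _ := GRing.Zmodule_isLmodule.Build R scalar_restriction
  restricted_scaleA restricted_scale1 restricted_scaleDr restricted_scaleDl.

Lemma scalar_restriction_non_faithful :
  (exists2 x, I x & x <> 0) -> non_faithful scalar_restriction.
Proof.
case=> x Ix x0; exists x => // v.
by rewrite /GRing.scale /= /restricted_scale (proj2 (quotring_pi_eq0 HI x) Ix) scale0r.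
Qed.

Lemma has_simple_submodule_unrestrict :
  has_simple_submodule scalar_restriction -> has_simple_submodule N.
Proof.
apply: (@has_simple_submodule_image _ _ _ _ (fun x : scalar_restriction => x : N)) => //.
- by move=> r x; exists (\pi_(quotring HI) r).
- by move=> q x; exists (repr q); rewrite /GRing.scale /= /restricted_scale reprK.
Qed.

End ScalarRestriction.

Section AnnihilatorModule.
Variables (R : pzRingType) (M : lmodType R).

Local Notation Rann := (quotring (ann_two_sided_ideal M)).

Definition ann_module : Type := M.
HB.instance Definition _ := GRing.Zmodule.on ann_module.

Definition ann_scale (q : Rann) (x : ann_module) : ann_module := (repr q : R) *: (x : M).

Lemma repr_pi_scale (a : R) (x : M) : (repr (\pi_Rann a) : R) *: x = a *: x.
Proof.
apply/eqP; rewrite -subr_eq0 -scalerBl; apply/eqP.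
exact: (Krepr (proj1 (ann_two_sided_ideal M))).
Qed.

Lemma ann_scaleA a b v : ann_scale a (ann_scale b v) = ann_scale (a * b) v.
Proof.
rewrite /ann_scale; elim/quotW: a => a; elim/quotW: b => b.
by rewrite -quotring_piM !repr_pi_scale scalerA.
Qed.

Lemma ann_scale1 : left_id 1 ann_scale.
Proof.
move=> v; rewrite /ann_scale -(quotring_pi1 (ann_two_sided_ideal M)).
by rewrite repr_pi_scale scale1r.
Qed.

Lemma ann_scaleDr : right_distributive ann_scale +%R.
Proof. by move=> a u v; rewrite /ann_scale scalerDr. Qed.

Lemma ann_scaleDl v : {morph ann_scale^~ v : a b / a + b}.
Proof.
move=> a b; rewrite /ann_scale; elim/quotW: a => a; elim/quotW: b => b.
by rewrite -quotring_piD !repr_pi_scale scalerDl.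
Qed.

HB.instance Definition _ := GRing.Zmodule_isLmodule.Build Rann ann_module
  ann_scaleA ann_scale1 ann_scaleDr ann_scaleDl.

Lemma has_simple_submodule_of_ann_module :
  has_simple_submodule ann_module -> has_simple_submodule M.
Proof.
apply: (@has_simple_submodule_image _ _ _ _ (fun x : ann_module => x : M)) => //.
- by move=> q x; exists (repr q).
- by move=> r x; exists (\pi_Rann r); rewrite /GRing.scale /= /ann_scale repr_pi_scale.
Qed.

End AnnihilatorModule.

Section ModuleFacts.
Variables (R : pzRingType) (M : lmodType R).

Lemma semiartinian_has_simple :
  semiartinian M -> nonzero_module M -> has_simple_submodule M.
Proof. by move=> sa; apply: (sa M idfun) => m; exists m. Qed.

Lemma non_faithful_image (N : lmodType R) (f : {linear M -> N}) :
  (forall n, exists m, f m = n) -> non_faithful M -> non_faithful N.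
Proof.
move=> f_surj [r r0 hr]; exists r => // n.
by have [m <-] := f_surj n; rewrite -linearZ hr linear0.
Qed.

Lemma simple_submodule_sub_socle (S : M -> Prop) y :
  simple_submodule S -> S y -> socle y.
Proof.
move=> simS Sy; exists [:: y]; split; last by rewrite big_seq1.
by move=> z; rewrite mem_seq1 => /eqP ->; exists S.
Qed.

Lemma essential_over_socle_has_simple :
  essential_over_socle M -> nonzero_module M -> has_simple_submodule M.
Proof.
move=> ess [m m0].
have [||x [_ [s [hs ->]] x0]] := ess (fun _ => True); [by [] | by exists m |].
case: s hs x0 => [|y s] hs; first by rewrite big_nil.
by have [S simS _] := hs y (mem_head _ _); exists S.
Qed.

End ModuleFacts.

Section CyclicQuotient.
Variables (R : pzRingType) (L : R -> Prop) (HL : left_ideal L).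

Lemma cyclic_quot_nonzero : (exists x, ~ L x) -> nonzero_module (cyclic_quot HL).
Proof. by case=> x Lx; exists (\pi_(quotmod HL) x) => /quotmod_pi_eq0. Qed.

Lemma core_ann_cyclic_quot r : core L r -> ann (cyclic_quot HL) r.
Proof.
case=> J [[_ JR] JL Jr]; elim/quotW=> a.
by rewrite -quotmod_piZ; apply/quotmod_pi_eq0/JL/JR.
Qed.

End CyclicQuotient.

Section Conditions.
Variable R : pzRingType.

Definition cond_semiartinian :=
  forall M : lmodType R, non_faithful M -> semiartinian M.

Definition cond_essential_socle :=
  forall M : lmodType R, non_faithful M -> essential_over_socle M.

Definition cond_has_simple :=
  forall M : lmodType R, nonzero_module M -> non_faithful M -> has_simple_submodule M.

Definition cond_quotient_semiartinian :=
  forall (I : R -> Prop) (HI : two_sided_ideal I),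
    (exists2 x, I x & x <> 0) -> left_semiartinian (quotring HI).

Definition cond_cyclic_has_simple :=
  forall (L : R -> Prop) (HL : left_ideal L),
    (exists x, ~ L x) -> (exists2 r, core L r & r <> 0) ->
    has_simple_submodule (cyclic_quot HL).

Lemma cond_semiartinian_has_simple : cond_semiartinian -> cond_has_simple.
Proof. by move=> h M nzM nfM; apply: semiartinian_has_simple (h M nfM) nzM. Qed.

Lemma cond_has_simple_semiartinian : cond_has_simple -> cond_semiartinian.
Proof.
move=> h M nfM N f f_surj nzN.
exact: h nzN (non_faithful_image f_surj nfM).
Qed.

Lemma cond_essential_socle_has_simple : cond_essential_socle -> cond_has_simple.
Proof. by move=> h M nzM nfM; apply: essential_over_socle_has_simple (h M nfM) nzM. Qed.

Lemma cond_has_simple_cyclic : cond_has_simple -> cond_cyclic_has_simple.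
Proof.
move=> h L HL nL [r coreLr r0]; apply: h; first exact: cyclic_quot_nonzero.
by exists r => //; apply: core_ann_cyclic_quot coreLr.
Qed.

Lemma cond_cyclic_essential_socle : cond_cyclic_has_simple -> cond_essential_socle.
Proof.
move=> h M [r r0 hr] N [_ _ NZ] [n Nn n0].
have ann_n_proper : exists x, ~ ann_elt n x by exists 1; rewrite /ann_elt scale1r.
have ann_n_core : exists2 r, core (ann_elt n) r & r <> 0.
  by exists r => //; apply: ann_sub_core_ann_elt.
have [S simS Sn] := simple_submodule_in_cyclic (h _ _ ann_n_proper ann_n_core).
have [_ [y Sy y0] _] := simS; have [a ya] := Sn y Sy.
exists y; split=> //; last exact: simple_submodule_sub_socle simS Sy.
by rewrite ya; apply: NZ.
Qed.

Lemma cond_has_simple_quotient : cond_has_simple -> cond_quotient_semiartinian.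
Proof.
move=> h I HI nzI N nzN; apply: has_simple_submodule_unrestrict.
exact: h (scalar_restriction_non_faithful N nzI).
Qed.

Lemma cond_quotient_has_simple : cond_quotient_semiartinian -> cond_has_simple.
Proof.
move=> h M nzM [r r0 hr]; apply: has_simple_submodule_of_ann_module.
by apply: (h _ (ann_two_sided_ideal M)); first by exists r.
Qed.

End Conditions.

Theorem proposition3p6 (R : nzRingType) :
  [<->
   (forall M : lmodType R, non_faithful M -> semiartinian M);
   (forall M : lmodType R, non_faithful M -> essential_over_socle M);
   (forall M : lmodType R, nonzero_module M -> non_faithful M ->
      has_simple_submodule M);
   (forall (I : R -> Prop) (HI : two_sided_ideal I),
      (exists2 x, I x & x <> 0%R) -> left_semiartinian (quotring HI));
   (forall (L : R -> Prop) (HL : left_ideal L),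
      (exists x, ~ L x) -> (exists2 r, core L r & r <> 0%R) ->
      has_simple_submodule (cyclic_quot HL))].
Proof.
tfae=> h.
- exact/cond_cyclic_essential_socle/cond_has_simple_cyclic/cond_semiartinian_has_simple.
- exact: cond_essential_socle_has_simple.
- exact: cond_has_simple_quotient.
- exact/cond_has_simple_cyclic/cond_quotient_has_simple.
- apply/cond_has_simple_semiartinian/cond_essential_socle_has_simple.
  exact: cond_cyclic_essential_socle.
Qed.
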